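(* Let $P(u)=\sum_{\ell=1}^kc_\ell e^{-\lambda_\ell u}$ on $[0,\infty)$ with $0<\lambda_1<\dots<\lambda_k$ and nonzero reals $c_1,\dots,c_k$. Assume the sequence $c_1,\dots,c_k$ has at most two sign changes, $P(0)<0$, and $P(u)\to0$ from above as $u\to\infty$ (i.e. $P(u)>0$ for all sufficiently large $u$ and $\lim_{u\to\infty}P(u)=0$). Then there exists $u_0>0$ such that for every non-decreasing function $f$ on $[0,\infty)$ and every non-negative finite Borel measure $\nu$ on $[0,\infty)$ for which the integrals converge, $\int_0^\infty f(u)P(u)\,d\nu(u)\ge f(u_0)\int_0^\infty P(u)\,d\nu(u)$.
   Context: The number of sign changes of a finite sequence of nonzero reals is the number of consecutive pairs of entries with opposite signs. *)

From HB Require Import structures.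
From mathcomp Require Import all_boot all_order all_algebra.
From mathcomp Require Import all_classical all_reals all_analysis.
Set Implicit Arguments. Unset Strict Implicit. Unset Printing Implicit Defensive.
Import Order.TTheory GRing.Theory Num.Theory.
Local Open Scope ring_scope.

Definition sign_changes (R : realDomainType) (s : seq R) : nat :=
  \sum_(i < (size s).-1) (s`_i * s`_i.+1 < 0)%R.

Definition exp_poly (R : realType) (c lam : seq R) (u : R) : R :=
  \sum_(l < size c) c`_l * expR (- (lam`_l * u)).

From HB Require Import structures.
From mathcomp Require Import all_boot all_order all_algebra.
From mathcomp Require Import all_classical all_reals all_analysis.
From mathcomp Require Import lra.

(** Up to the positive factor [expR (mu u)], the exponents of [P] can be made
  to change sign exactly where the coefficients pass from the negative block
  to the last positive block; then the derivative of the rescaled sum has a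
  single sign change (from [-] to [+] as [u] grows), so the rescaled sum is
  quasiconvex.  When the coefficients have at most two sign changes this
  makes [{u >= 0 | P u < 0}] an initial segment of [[0, +oo[]: for the pattern
  [+ - +] because [P 0 < 0], for [- + -] because [P] is eventually positive.
  With [u0] the end of that segment, [f u * P u >= f u0 * P u] pointwise for
  nondecreasing [f], and integrating gives the inequality. *)

Set Implicit Arguments.
Unset Strict Implicit.
Unset Printing Implicit Defensive.

Import Order.TTheory GRing.Theory Num.Theory numFieldNormedType.Exports.
Local Open Scope classical_set_scope.
Local Open Scope ring_scope.

Lemma ler_sg (R : realDomainType) (x y : R) : x <= y -> Num.sg x <= Num.sg y.
Proof.
move=> xy; case: (sgrP x) => hx; case: (sgrP y) => hy //;
  rewrite ?lerN10 ?ler01 //; lra.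
Qed.

Lemma monotone_pred_threshold (P : pred nat) n :
  (forall i j, (i <= j < n)%N -> P i -> P j) ->
  exists a, forall l, (l < n)%N -> P l = (a <= l)%N.
Proof.
move=> P_mono; exists (find P (iota 0 n)) => l ln.
case: (ltnP l (find P (iota 0 n))) => [lt_l|le_l].
  by have := before_find 0 lt_l; rewrite nth_iota // add0n leqNgt lt_l.
have find_lt : (find P (iota 0 n) < n)%N := leq_ltn_trans le_l ln.
have has_P : has P (iota 0 n) by rewrite has_find size_iota.
apply: (P_mono (find P (iota 0 n))); first by rewrite le_l ln.
by have := nth_find 0 has_P; rewrite nth_iota.
Qed.

Section SignPattern.
Variable R : realDomainType.
Implicit Types (c : seq R) (n : nat) (d r : nat -> R).

Definition nonincreasing_upto n r := forall i j, (i <= j < n)%N -> r j <= r i.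

Lemma nonincreasing_split n r (b : nat) : nonincreasing_upto n r ->
  exists mu, (forall l, (l < n)%N -> (l < b)%N -> mu <= r l) /\
             (forall l, (l < n)%N -> (b <= l)%N -> r l <= mu).
Proof.
move=> r_noninc; case: (ltnP b n) => bn.
- by exists (r b); split=> l ln lb; apply: r_noninc; rewrite ?ln ?bn ?lb ?(ltnW lb).
- exists (r n.-1); split=> l ln lb; last by move: (leq_trans bn lb); rewrite leqNgt ln.
  by apply: r_noninc; case: n ln {bn} => // n ln; rewrite /= ltnSn andbT -ltnS.
Qed.

Definition pos_neg_pos n d (a b : nat) : Prop :=
  [/\ (a <= b)%N,
      forall l, (l < n)%N -> (l < a)%N || (b <= l)%N -> 0 <= d l
    & forall l, (l < n)%N -> (a <= l < b)%N -> d l <= 0].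

Definition prefix_sign_changes c (m : nat) : nat :=
  \sum_(i < m) (c`_i * c`_i.+1 < 0)%R.

Lemma prefix_sign_changesS c m :
  prefix_sign_changes c m.+1 = (prefix_sign_changes c m + (c`_m * c`_m.+1 < 0)%R)%N.
Proof. by rewrite /prefix_sign_changes big_ord_recr. Qed.

Lemma prefix_sign_changes_mono c m m' :
  (m <= m')%N -> (prefix_sign_changes c m <= prefix_sign_changes c m')%N.
Proof. by move=> /subnKC <-; rewrite /prefix_sign_changes big_split_ord leq_addr. Qed.

Lemma sg_via_prod_sign (x y : R) : x != 0 -> y != 0 ->
  Num.sg y = Num.sg x * (-1) ^+ (x * y < 0)%R.
Proof.
move=> x0 y0; rewrite neqr0_sign ?mulf_neq0 // sgrM mulrA -expr2 sqr_sg x0.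
by rewrite mul1r.
Qed.

Lemma sg_nth_prefix_sign_changes c m : all (fun x => x != 0) c -> (m < size c)%N ->
  Num.sg c`_m = Num.sg c`_0 * (-1) ^+ odd (prefix_sign_changes c m).
Proof.
move=> /all_nthP c_neq0; elim: m => [|m IH] mc.
  by rewrite /prefix_sign_changes big_ord0 mulr1.
rewrite (@sg_via_prod_sign c`_m) ?c_neq0 ?(ltnW mc) // IH ?(ltnW mc) //.
by rewrite prefix_sign_changesS oddD oddb signr_addb mulrA.
Qed.

Lemma sign_changes_le2_pos_neg_pos c :
  all (fun x => x != 0) c -> (sign_changes c <= 2)%N ->
  exists a b, pos_neg_pos (size c) (nth 0 c) a b \/
              pos_neg_pos (size c) (fun l => - c`_l) a b.
Proof.
move=> c_neq0 c_sc; set n := size c; pose psc := prefix_sign_changes c.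
have [n0|n_gt0] := posnP n; first by exists 0%N, 0%N; left; split=> // l; rewrite n0.
have psc_le2 l : (l < n)%N -> (psc l <= 2)%N.
  (* [sign_changes c] is [psc n.-1] by definition. *)
  move=> ln; apply: leq_trans c_sc.
  by apply: prefix_sign_changes_mono; rewrite -ltnS prednK.
have psc_persists k i j : (i <= j < n)%N -> (k < psc i)%N -> (k < psc j)%N.
  by case/andP => ij _ /leq_trans; apply; apply: prefix_sign_changes_mono.
have [a psc_gt0] := monotone_pred_threshold (psc_persists 0%N).
have [b psc_gt1] := monotone_pred_threshold (psc_persists 1%N).
have c0_neq0 : c`_0 != 0 by apply: (all_nthP 0 c_neq0).
pose eps := Num.sg c`_0.
have sg_eps_c l : (l < n)%N -> Num.sg (eps * c`_l) = (-1) ^+ odd (psc l).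
  move=> ln; rewrite sgrM sgr_id (sg_nth_prefix_sign_changes c_neq0 ln).
  by rewrite mulrA -expr2 sqr_sg c0_neq0 mul1r.
have pnp : pos_neg_pos n (fun l => eps * c`_l) (minn a b) b.
  split=> [|l ln|l ln /andP[abl lb]]; first exact: geq_minr.
    rewrite -sgr_ge0 sg_eps_c // => /orP[lab|bl].
      have -> : psc l = 0%N.
        apply/eqP; rewrite -leqn0 leqNgt psc_gt0 // -ltnNge.
        exact: leq_trans lab (geq_minl a b).
      by rewrite expr0 ler01.
    have -> : psc l = 2%N by apply/eqP; rewrite eqn_leq psc_le2 // psc_gt1.
    by rewrite expr0 ler01.
  have al : (a <= l)%N by move: abl; rewrite geq_min [(b <= l)%N]leqNgt lb orbF.
  rewrite -sgr_le0 sg_eps_c //.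
  have -> : psc l = 1%N.
    by apply/eqP; rewrite eqn_leq -ltnS ltnNge psc_gt1 // -ltnNge lb psc_gt0.
  by rewrite expr1 lerN10.
exists (minn a b), b; case: (ltrgtP c`_0 0) pnp => [c0|c0|c0]; rewrite /eps.
- rewrite ltr0_sg // => pnp; right.
  by under eq_fun => l do rewrite -mulN1r.
- rewrite gtr0_sg // => pnp; left.
  by have -> : nth 0 c = (fun l => 1 * c`_l) by apply/funext => l; rewrite mul1r.
- by rewrite c0 eqxx in c0_neq0.
Qed.

End SignPattern.

Lemma quasiconvex_of_derive_crossing (R : realType) (g dg : R -> R) :
  (forall t : R, is_derive t 1 g (dg t)) ->
  (forall s t, s <= t -> 0 <= dg s -> 0 <= dg t) ->
  forall x y z, x <= y -> y <= z -> g y <= g x \/ g y <= g z.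
Proof.
move=> g_der dg_cross x y z xy yz.
have g_cont a b : {within `[a, b], continuous g}.
  apply/continuous_subspaceT => t.
  by apply/differentiable_continuous/derivable1_diffP; have [] := g_der t.
case: (lerP 0 (dg y)) => dgy.
- right; have [t + E] := MVT_segment yz (fun t _ => g_der t) (g_cont y z).
  rewrite in_itv /= => /andP[yt _].
  have dgt := dg_cross _ _ yt dgy.
  have : 0 <= dg t * (z - y) by rewrite mulr_ge0 // subr_ge0.
  by rewrite -E subr_ge0.
- left; have [t + E] := MVT_segment xy (fun t _ => g_der t) (g_cont x y).
  rewrite in_itv /= => /andP[_ ty].
  have dgt : dg t <= 0.
    by rewrite leNgt; apply/negP => /ltW /(dg_cross _ _ ty); rewrite leNgt dgy.
  have : dg t * (y - x) <= 0 by rewrite mulr_le0_ge0 // subr_ge0.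
  by rewrite -E subr_le0.
Qed.

Section ExpSum.
Variable R : realType.
Implicit Types (n : nat) (d r : nat -> R) (x : R).

Definition expsum n d r (u : R) : R := \sum_(l < n) d l * expR (r l * u).

Lemma is_derive_expsum n d r x :
  is_derive x 1 (expsum n d r) (expsum n (fun l => d l * r l) r x).
Proof.
have term a b : is_derive x 1 (fun u => a * expR (b * u)) (a * b * expR (b * x)).
  have lin : is_derive x 1 ( *%R b) b.
    by apply: is_derive_eq; rewrite /GRing.scale /= mulr1.
  have -> : (fun u => a * expR (b * u)) = a \*: (expR \o *%R b) by [].
  apply: is_derive_eq (is_deriveZ a (is_derive1_comp (is_derive_expR _) lin)) _.
  by rewrite /GRing.scale /= [expR _ * b]mulrC mulrA.
have -> : expsum n d r = \sum_(l < n) (fun u => d l * expR (r l * u)).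
  by apply/funext => u; rewrite /expsum fct_sumE.
exact: is_derive_sum.
Qed.

Lemma continuous_expsum n d r : continuous (expsum n d r).
Proof.
move=> x; apply/differentiable_continuous/derivable1_diffP.
by have [] := is_derive_expsum n d r x.
Qed.

Lemma expsum_shift n d r (s u : R) :
  expsum n d r u = expR (s * u) * expsum n d (fun l => r l - s) u.
Proof.
rewrite /expsum mulr_sumr; apply: eq_bigr => l _.
by rewrite mulrCA -expRD mulrBl addrCA subrr addr0.
Qed.

Lemma expsumN n d r (u : R) : expsum n (fun l => - d l) r u = - expsum n d r u.
Proof. by rewrite /expsum -sumrN; apply: eq_bigr => l _; rewrite mulNr. Qed.

Lemma sg_expsum_shift n d r (s u : R) :
  Num.sg (expsum n d r u) = Num.sg (expsum n d (fun l => r l - s) u).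
Proof. by rewrite (expsum_shift _ _ _ s) sgrM gtr0_sg ?expR_gt0 ?mul1r. Qed.

Lemma expsum_nondecreasing n d r :
  (forall l, (l < n)%N -> 0 <= d l * r l) -> {homo expsum n d r : x y / x <= y}.
Proof.
move=> dr_ge0 x y xy; apply: ler_sum => l _; have := dr_ge0 l (ltn_ord l).
case: (ltrgtP (d l) 0) => [dl|dl|->]; last by rewrite !mul0r.
- move=> drl; apply: ler_wnM2l; [exact: ltW | rewrite ler_expR; nra].
- move=> drl; apply: ler_wpM2l; [exact: ltW | rewrite ler_expR; nra].
Qed.

(* With [tau] between the two blocks of exponents, every term of
   [expR (- tau u) * expsum n d r u] is nondecreasing in [u]. *)
Lemma expsum_ge0_persists n d r (a : nat) : nonincreasing_upto n r ->
  (forall l, (l < n)%N -> (l < a)%N -> 0 <= d l) ->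
  (forall l, (l < n)%N -> (a <= l)%N -> d l <= 0) ->
  forall s t, s <= t -> 0 <= expsum n d r s -> 0 <= expsum n d r t.
Proof.
move=> r_noninc d_ge0 d_le0 s t st.
have [tau [tau_le tau_ge]] := nonincreasing_split a r_noninc.
rewrite (expsum_shift _ _ _ tau s) (expsum_shift _ _ _ tau t).
rewrite !pmulr_rge0 ?expR_gt0 // => /le_trans; apply.
apply: expsum_nondecreasing => // l ln.
case: (ltnP l a) => la.
- by rewrite mulr_ge0 ?d_ge0 // subr_ge0 tau_le.
- by rewrite mulr_le0 ?d_le0 // subr_le0 tau_ge.
Qed.

Lemma expsum_sg_quasiconvex n d r (a b : nat) :
  nonincreasing_upto n r -> pos_neg_pos n d a b ->
  forall x y z, x <= y -> y <= z ->
  Num.sg (expsum n d r y) <= Num.max (Num.sg (expsum n d r x))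
                                     (Num.sg (expsum n d r z)).
Proof.
move=> r_noninc [ab d_pos d_neg] x y z xy yz.
have [mu [mu_le mu_ge]] := nonincreasing_split b r_noninc.
pose q l := r l - mu.
have q_noninc : nonincreasing_upto n q.
  by move=> i j ijn; rewrite lerD2r r_noninc.
have cross : forall s t, s <= t ->
    0 <= expsum n (fun l => d l * q l) q s -> 0 <= expsum n (fun l => d l * q l) q t.
  apply: (expsum_ge0_persists (a := a)) => // l ln la.
    by rewrite mulr_ge0 ?d_pos ?la // subr_ge0 mu_le // (leq_trans la ab).
  case: (ltnP l b) => lb.
    by rewrite mulr_le0_ge0 ?d_neg ?la // subr_ge0 mu_le.
  by rewrite mulr_ge0_le0 ?d_pos ?lb ?orbT // subr_le0 mu_ge.
rewrite (sg_expsum_shift _ _ _ mu x) (sg_expsum_shift _ _ _ mu y).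
rewrite (sg_expsum_shift _ _ _ mu z) le_max.
have [] := quasiconvex_of_derive_crossing (is_derive_expsum n d q) cross xy yz.
  by move=> /ler_sg ->.
by move=> /ler_sg ->; rewrite orbT.
Qed.

Lemma expsum_lt0_downward_closed n d r (a b : nat) :
  nonincreasing_upto n r ->
  pos_neg_pos n d a b \/ pos_neg_pos n (fun l => - d l) a b ->
  expsum n d r 0 < 0 -> (\forall u \near +oo, 0 < expsum n d r u) ->
  forall y z, 0 <= y -> y <= z -> expsum n d r z < 0 -> expsum n d r y < 0.
Proof.
move=> r_noninc [pnp|pnp] P0 [M [_ P_ev]] y z y0 yz Pz.
- have := expsum_sg_quasiconvex r_noninc pnp y0 yz.
  rewrite (ltr0_sg P0) (ltr0_sg Pz) le_max orbb -sgr_lt0.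
  by move=> /le_lt_trans; apply; rewrite ltrN10.
- rewrite ltNge; apply/negP => Py.
  pose w := Num.max (M + 1) (z + 1).
  have zw : z <= w by rewrite le_max lerDl ler01 orbT.
  have Pw : 0 < expsum n d r w by apply: P_ev; rewrite /= lt_max ltrDl ltr01.
  move: (expsum_sg_quasiconvex r_noninc pnp yz zw).
  rewrite !expsumN !sgrN (ltr0_sg Pz) (gtr0_sg Pw) opprK le_max.
  by rewrite -sgr_ge0 in Py; case/orP; lra.
Qed.

End ExpSum.

Lemma exists_sign_switch (R : realType) (P : R -> R) :
  {for 0, continuous P} -> P 0 < 0 -> (\forall u \near +oo, 0 < P u) ->
  (forall y z, 0 <= y -> y <= z -> P z < 0 -> P y < 0) ->
  exists2 u0, 0 < u0 &
    forall u, 0 <= u -> (u < u0 -> P u < 0) /\ (u0 < u -> 0 <= P u).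
Proof.
move=> P_cont P0 [M [_ P_ev]] P_lt0_closed.
pose N := [set u | 0 <= u /\ P u < 0].
have N_sup : has_sup N.
  split; first by exists 0.
  exists (Num.max M 0) => u [_ Pu]; rewrite le_max leNgt.
  by apply/orP; left; apply/negP => /P_ev; lra.
have P_lt0_near0 : \forall t \near 0, P t < 0.
  exact: (@cvgr_lt R R (nbhs (0 : R)) _ P (P 0) P_cont 0 P0).
have [e /= e_gt0 P_lt0_ball] := iffLR (nbhs_ballP 0 _) P_lt0_near0.
have N_e2 : N (e / 2).
  split; first by rewrite divr_ge0 // ltW.
  by apply: P_lt0_ball; rewrite /ball /= sub0r normrN gtr0_norm; lra.
exists (sup N) => [|u u_ge0]; first by have := sup_upper_bound N_sup N_e2; lra.
split=> [u_lt|u_gt].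
  have [v [_ Pv] uv] := sup_adherent (eps := sup N - u) (ltac:(lra)) N_sup.
  by apply: (P_lt0_closed u v) => //; lra.
rewrite leNgt; apply/negP => Pu.
by have := sup_upper_bound N_sup (conj u_ge0 Pu); lra.
Qed.

Lemma le_integral_scale (R : realType) d (T : measurableType d)
    (mu : {measure set T -> \bar R}) (D : set T) (P g : T -> R) (k : R) :
  measurable D ->
  mu.-integrable D (fun x => (P x)%:E) -> mu.-integrable D (fun x => (g x)%:E) ->
  (forall x, D x -> k * P x <= g x) ->
  (k%:E * \int[mu]_(x in D) (P x)%:E <= \int[mu]_(x in D) (g x)%:E)%E.
Proof.
move=> mD iP ig kP_le_g; rewrite -integralZl //.
apply: le_integral => //; first exact: integrableZl.
by move=> x; rewrite inE => Dx; rewrite -EFinM lee_fin kP_le_g.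
Qed.

Theorem mainTheorem12 (R : realType) (c lam : seq R) :
  size lam = size c ->
  sorted <%R lam ->
  all (fun x => 0 < x) lam ->
  all (fun x => x != 0) c ->
  (sign_changes c <= 2)%N ->
  exp_poly c lam 0 < 0 ->
  (\forall u \near +oo, 0 < exp_poly c lam u) ->
  exp_poly c lam u @[u --> +oo] --> 0 ->
  exists2 u0 : R, 0 < u0 &
    forall (f : R -> R) (nu : {finite_measure set R -> \bar R}),
      (forall x y, 0 <= x -> x <= y -> f x <= f y) ->
      nu.-integrable `[0%R, +oo[ (fun u => (exp_poly c lam u)%:E) ->
      nu.-integrable `[0%R, +oo[ (fun u => (f u * exp_poly c lam u)%:E) ->
      ((f u0)%:E * \int[nu]_(u in `[0%R, +oo[) (exp_poly c lam u)%:E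
        <= \int[nu]_(u in `[0%R, +oo[) (f u * exp_poly c lam u)%:E)%E.
Proof.
move=> size_lam lam_sorted _ c_neq0 c_sc P0 P_ev _.
have PE : exp_poly c lam = expsum (size c) (nth 0 c) (fun l => - lam`_l).
  by apply/funext => u; apply: eq_bigr => l _; rewrite mulNr.
have lam_noninc : nonincreasing_upto (size c) (fun l => - lam`_l).
  move=> i j /andP[ij jn]; rewrite lerN2.
  have lam_le : sorted <=%R lam.
    by move: lam_sorted; rewrite lt_sorted_uniq_le => /andP[].
  apply: (sorted_leq_nth le_trans le_refl 0 lam_le) => //;
    by rewrite inE size_lam ?(leq_ltn_trans ij).
have [a [b pnp]] := sign_changes_le2_pos_neg_pos c_neq0 c_sc.
rewrite PE in P0 P_ev *.
have [u0 u0_gt0 P_sign] := exists_sign_switch (@continuous_expsum R _ _ _ 0) P0 P_ev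
  (expsum_lt0_downward_closed lam_noninc pnp P0 P_ev).
exists u0 => // f nu f_mono iP ifP.
apply: le_integral_scale => // u; rewrite /= in_itv /= andbT => u_ge0.
have [u_lt|u_gt|->] := ltrgtP u u0; last by [].
- by rewrite ler_wnM2r ?(ltW ((P_sign u u_ge0).1 u_lt)) // f_mono // ltW.
- by rewrite ler_wpM2r ?((P_sign u u_ge0).2 u_gt) // f_mono // ltW.
Qed.
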